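(* There is an absolute constant $C$ such that the following holds. Let $\alpha$ and $\beta$ be two discrete random variables defined on the same finite probability space. Then there exists a random variable $\gamma$ defined on the same probability space such that $H(\alpha\mid\beta,\gamma)=0$ and $H(\gamma)\le 2H(\alpha\mid\beta)+C$.
   Context: $H$ denotes Shannon entropy (logarithms base $2$) and $H(\cdot\mid\cdot)$ conditional Shannon entropy. The probability space is finite and every non-empty event has positive probability. In the paper the bound is written $H(\gamma)\le 2H(\alpha\mid\beta)+O(1)$, the $O(1)$ being a constant independent of $\alpha,\beta$. *)

From Stdlib Require Import Reals.
From mathcomp Require Import all_boot all_order all_algebra.
From mathcomp Require Import Rstruct.
Set Implicit Arguments. Unset Strict Implicit. Unset Printing Implicit Defensive.
Import Order.TTheory GRing.Theory Num.Theory.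
Local Open Scope ring_scope.

(* Base-2 logarithm (Stdlib ln; only applied to positive arguments or multiplied by 0). *)
Definition log2 (x : R) : R := (ln x / ln 2)%R.

Definition is_fprob (Omega : finType) (P : Omega -> R) : Prop :=
  (forall w, 0 < P w) /\ \sum_(w : Omega) P w = 1.

Definition rv_vals (Omega : finType) (T : eqType) (X : Omega -> T) : seq T :=
  undup [seq X w | w <- enum Omega].

Definition pr_eq (Omega : finType) (P : Omega -> R) (T : eqType) (X : Omega -> T) (x : T) : R :=
  \sum_(w : Omega | X w == x) P w.

Definition pr_eq2 (Omega : finType) (P : Omega -> R) (T U : eqType)
  (X : Omega -> T) (Y : Omega -> U) (x : T) (y : U) : R :=
  \sum_(w : Omega | (X w == x) && (Y w == y)) P w.

Definition entropy (Omega : finType) (P : Omega -> R) (T : eqType) (X : Omega -> T) : R :=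
  - \sum_(x <- rv_vals X) pr_eq P X x * log2 (pr_eq P X x).

Definition cond_entropy (Omega : finType) (P : Omega -> R) (T U : eqType)
  (X : Omega -> T) (Y : Omega -> U) : R :=
  \sum_(y <- rv_vals Y) pr_eq P Y y *
     (- \sum_(x <- rv_vals X)
          (pr_eq2 P X Y x y / pr_eq P Y y) * log2 (pr_eq2 P X Y x y / pr_eq P Y y)).

Definition rv_pair (Omega : finType) (U V : Type) (Y : Omega -> U) (Z : Omega -> V) :
  Omega -> U * V := fun w => (Y w, Z w).

From Stdlib Require Import Reals.
From mathcomp Require Import all_boot all_order all_algebra.
From mathcomp Require Import Rstruct.
From mathcomp Require Import ring lra.
Set Implicit Arguments. Unset Strict Implicit. Unset Printing Implicit Defensive.
Import Order.TTheory GRing.Theory Num.Theory.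
Local Open Scope ring_scope.

(* Given beta = b, rank the values of alpha by decreasing Pr[alpha = a, beta = b] and let
   gamma be the rank of alpha.  The pair (beta, gamma) determines alpha, and as the values
   ranked before a all have probability at least Pr[alpha = a, beta = b], the rank r of a
   satisfies r Pr[alpha = a, beta = b] <= Pr[beta = b], i.e. log2 r <= -log2 Pr[alpha = a | beta = b].
   Gibbs' inequality against the weights 1/(k(k+1)) then gives
   H(gamma) <= E[-log2 (1/(gamma (gamma+1)))] <= E[2 log2 gamma + 1] <= 2 H(alpha | beta) + 1. *)

Lemma ln2_gt0 : 0 < ln 2.
Proof.
have /RltP := ln_lt_2; apply: lt_trans.
by apply/RltP; apply: Rinv_0_lt_compat; apply: Rlt_0_2.
Qed.

Lemma log2_1 : log2 1 = 0.
Proof. by rewrite /log2 ln_1 R0E mul0r. Qed.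

Lemma log2_2 : log2 2%:R = 1.
Proof.
have -> : (2%:R : R) = IZR 2 by rewrite IZRposE INRE.
by rewrite /log2 divff // gt_eqF // ln2_gt0.
Qed.

(* The argument of log2 is parsed in R_scope, hence the %R for the ring operations. *)
Lemma log2M x y : 0 < x -> 0 < y -> log2 (x * y)%R = log2 x + log2 y.
Proof. by move=> /RltP x_gt0 /RltP y_gt0; rewrite /log2 ln_mult // -mulrDl. Qed.

Lemma log2V x : 0 < x -> log2 x^-1%R = - log2 x.
Proof. by move=> /RltP x_gt0; rewrite /log2 -RinvE ln_Rinv // mulNr. Qed.

Lemma ler_log2 x y : 0 < x -> x <= y -> log2 x <= log2 y.
Proof.
move=> /RltP x_gt0 /RleP le_xy; rewrite /log2 ler_pM2r ?invr_gt0 ?ln2_gt0 //.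
apply/RleP; case: (Rle_lt_or_eq_dec _ _ le_xy) => [lt_xy|<-]; last exact: Rle_refl.
exact/Rlt_le/ln_increasing.
Qed.

Lemma log2_le_sub1 x : 0 < x -> log2 x <= (x - 1) / ln 2.
Proof.
move=> /RltP x_gt0; rewrite /log2 ler_pM2r ?invr_gt0 ?ln2_gt0 //.
have /RleP := exp_ineq1_le (ln x); rewrite exp_ln // RplusE R1E; lra.
Qed.

Section Expectations.
Variables (Omega : finType) (P : Omega -> R).
Hypothesis P_gt0 : forall w, 0 < P w.

Lemma mem_rv_vals (T : eqType) (X : Omega -> T) w : X w \in rv_vals X.
Proof. by rewrite mem_undup map_f ?mem_enum. Qed.

Lemma rv_valsP (T : eqType) (X : Omega -> T) x :
  x \in rv_vals X -> exists w, X w = x.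
Proof. by rewrite mem_undup => /mapP[w _ ->]; exists w. Qed.

Lemma partition_rv_vals (T : eqType) (X : Omega -> T) (F : Omega -> R) :
  \sum_(x <- rv_vals X) \sum_(w | X w == x) F w = \sum_w F w.
Proof.
under eq_bigr do rewrite big_mkcond.
rewrite exchange_big /=; apply: eq_bigr => w _; rewrite -big_mkcond big_const_seq.
have /eq_count-> : eq_op (X w) =1 pred1 (X w) by move=> x; apply: eq_sym.
by rewrite count_uniq_mem ?undup_uniq // mem_rv_vals /= addr0.
Qed.

Lemma sum_pr_eq (T : eqType) (X : Omega -> T) (f : T -> R) :
  \sum_(x <- rv_vals X) pr_eq P X x * f x = \sum_w P w * f (X w).
Proof.
rewrite -(partition_rv_vals X); apply: eq_bigr => x _.
by rewrite /pr_eq big_distrl; apply: eq_bigr => w /eqP ->.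
Qed.

Lemma sum_pr_eq2 (T U : eqType) (X : Omega -> T) (Y : Omega -> U) (f : T -> U -> R) :
  \sum_(y <- rv_vals Y) \sum_(x <- rv_vals X) pr_eq2 P X Y x y * f x y
  = \sum_w P w * f (X w) (Y w).
Proof.
rewrite -(partition_rv_vals Y); apply: eq_bigr => y _.
rewrite [RHS]big_mkcond /= -(partition_rv_vals X); apply: eq_bigr => x _.
rewrite /pr_eq2 big_distrl /= big_mkcondr; apply: eq_bigr => w /eqP ->.
by case: eqP => [->|].
Qed.

Lemma sum_pr_eq2_l (T U : eqType) (X : Omega -> T) (Y : Omega -> U) y :
  \sum_(x <- rv_vals X) pr_eq2 P X Y x y = pr_eq P Y y.
Proof.
rewrite /pr_eq [RHS]big_mkcond -(partition_rv_vals X); apply: eq_bigr => x _.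
by rewrite /pr_eq2 big_mkcondr.
Qed.

Lemma pr_eq_ge (T : eqType) (X : Omega -> T) w : P w <= pr_eq P X (X w).
Proof. by rewrite /pr_eq (bigD1 w) //= lerDl sumr_ge0 // => v _; apply: ltW. Qed.

Lemma pr_eq2_ge (T U : eqType) (X : Omega -> T) (Y : Omega -> U) w :
  P w <= pr_eq2 P X Y (X w) (Y w).
Proof.
by rewrite /pr_eq2 (bigD1 w) ?eqxx //= lerDl sumr_ge0 // => v _; apply: ltW.
Qed.

Lemma pr_eq2_ge0 (T U : eqType) (X : Omega -> T) (Y : Omega -> U) x y :
  0 <= pr_eq2 P X Y x y.
Proof. by rewrite sumr_ge0 // => w _; apply: ltW. Qed.

Lemma pr_eq_gt0 (T : eqType) (X : Omega -> T) x :
  x \in rv_vals X -> 0 < pr_eq P X x.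
Proof. by case/rv_valsP => w <-; apply: lt_le_trans (pr_eq_ge X w). Qed.

Lemma entropyE (T : eqType) (X : Omega -> T) :
  entropy P X = \sum_w P w * - log2 (pr_eq P X (X w)).
Proof.
rewrite /entropy RoppE -sumrN -(sum_pr_eq X (fun x => - log2 (pr_eq P X x))).
by apply: eq_bigr => x _; rewrite mulrN.
Qed.

Lemma cond_entropyE (T U : eqType) (X : Omega -> T) (Y : Omega -> U) :
  cond_entropy P X Y
  = \sum_w P w * - log2 (pr_eq2 P X Y (X w) (Y w) / pr_eq P Y (Y w)).
Proof.
rewrite /cond_entropy -(sum_pr_eq2 X Y (fun x y => - log2 (pr_eq2 P X Y x y / pr_eq P Y y))).
apply: eq_big_seq => y /pr_eq_gt0 pY_gt0; rewrite -sumrN big_distrr /=.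
by apply: eq_bigr => x _; field; rewrite gt_eqF.
Qed.

Lemma cond_entropy_eq0 (T U : eqType) (X : Omega -> T) (Y : Omega -> U) :
  (forall w v, Y w = Y v -> X w = X v) -> cond_entropy P X Y = 0.
Proof.
move=> XofY; rewrite cond_entropyE big1 // => w _.
have -> : pr_eq2 P X Y (X w) (Y w) = pr_eq P Y (Y w).
  apply: eq_bigl => v.
  by case: (eqVneq (Y v) (Y w)) => [/XofY->|_]; rewrite ?eqxx ?andbF.
rewrite RdivE divff ?gt_eqF ?(pr_eq_gt0 (mem_rv_vals _ _)) //.
by rewrite -R1E log2_1 oppr0 mulr0.
Qed.

End Expectations.

Section Gibbs.
Variables (Omega : finType) (P : Omega -> R).
Hypotheses (P_gt0 : forall w, 0 < P w) (P_sum1 : \sum_w P w = 1).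

Lemma entropy_le_cross_entropy (T : eqType) (X : Omega -> T) (q : T -> R) :
  (forall x, x \in rv_vals X -> 0 < q x) -> \sum_(x <- rv_vals X) q x <= 1 ->
  entropy P X <= \sum_w P w * - log2 (q (X w)).
Proof.
move=> q_gt0 sum_q_le1; set p := pr_eq P X.
have pX_gt0 w : 0 < p (X w) := pr_eq_gt0 P_gt0 (mem_rv_vals X w).
have qX_gt0 w : 0 < q (X w) := q_gt0 _ (mem_rv_vals X w).
have sum_ratio_le1 : \sum_w P w * (q (X w) / p (X w)) <= 1.
  rewrite -(sum_pr_eq P X (fun x => q x / p x)) (eq_big_seq q) // => x.
  by move=> /(pr_eq_gt0 P_gt0) px_gt0; rewrite mulrCA divff ?mulr1 ?gt_eqF.
have log_ratio w :
    - log2 (p (X w)) <= - log2 (q (X w)) + (q (X w) / p (X w) - 1) / ln 2.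
  have := log2_le_sub1 (divr_gt0 (qX_gt0 w) (pX_gt0 w)).
  rewrite log2M ?invr_gt0 // log2V //; lra.
rewrite entropyE; apply: le_trans (ler_sum _ (fun w _ => ler_wpM2l (ltW (P_gt0 w)) (log_ratio w))) _.
have -> : \sum_w P w * (- log2 (q (X w)) + (q (X w) / p (X w) - 1) / ln 2)
    = \sum_w P w * - log2 (q (X w))
      + (\sum_w P w * (q (X w) / p (X w)) - \sum_w P w) / ln 2.
  rewrite mulrBl !mulr_suml -sumrB -big_split /=; apply: eq_bigr => w _; ring.
rewrite gerDl P_sum1 pmulr_lle0 ?invr_gt0 ?ln2_gt0 // subr_le0 //.
Qed.

End Gibbs.

(* Weights 1/(k(k+1)): they telescope to a total mass below 1, while
   -log2 of them is only 2 log2 k + 1.  Note inv_pronic 0 = 0, as 0^-1 = 0. *)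
Definition inv_pronic (k : nat) : R := (k%:R * k.+1%:R)^-1.

Lemma inv_pronic_gt0 k : (0 < k)%N -> 0 < inv_pronic k.
Proof. by move=> k_gt0; rewrite invr_gt0 mulr_gt0 ?ltr0n. Qed.

Lemma sum_inv_pronic N : \sum_(0 <= k < N.+1) inv_pronic k = 1 - N.+1%:R^-1.
Proof.
elim: N => [|N IHN]; first by rewrite big_nat1 /inv_pronic mul0r invr0 invr1 subrr.
rewrite big_nat_recr //= IHN /inv_pronic -[N.+2%:R]natr1.
have : 0 < N.+1%:R :> R by rewrite ltr0n.
move: (N.+1%:R : R) => n n_gt0; field.
by rewrite !gt_eqF // ltr_wpDr.
Qed.

Lemma sum_inv_pronic_le1 (s : seq nat) : uniq s -> \sum_(k <- s) inv_pronic k <= 1.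
Proof.
move=> s_uniq; set N := \max_(k <- s) k.
have s_perm : perm_eq [seq k <- iota 0 N.+1 | k \in s] s.
  apply: uniq_perm; rewrite ?filter_uniq ?iota_uniq // => k.
  rewrite mem_filter mem_iota andb_idr // => ks.
  by rewrite add0n ltnS leq_bigmax_seq.
rewrite -(perm_big _ s_perm) big_filter.
apply: le_trans (_ : _ <= \sum_(0 <= k < N.+1) inv_pronic k) _.
  rewrite [leRHS](bigID (mem s)) /= lerDl sumr_ge0 // => k _.
  by rewrite invr_ge0 mulr_ge0.
by rewrite sum_inv_pronic lerBlDr lerDl invr_ge0.
Qed.

Lemma neg_log2_inv_pronic k : (0 < k)%N -> - log2 (inv_pronic k) <= 2 * log2 k%:R + 1.
Proof.
move=> k_gt0; rewrite /inv_pronic log2V ?mulr_gt0 ?ltr0n // opprK log2M ?ltr0n //.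
have le_log : log2 k.+1%:R <= log2 (2%:R * k%:R)%R.
  apply: ler_log2; rewrite ?ltr0n // -natr1.
  have : 1 <= k%:R :> R by rewrite ler1n.
  lra.
rewrite log2M ?ltr0n // log2_2 in le_log; lra.
Qed.

Section ConditionalRank.
Variables (Omega : finType) (P : Omega -> R) (A B : eqType).
Variables (alpha : Omega -> A) (beta : Omega -> B).
Hypothesis P_gt0 : forall w, 0 < P w.

Let p a b := pr_eq2 P alpha beta a b.

Definition pr_ge (b : B) : rel A := fun a a' => p a' b <= p a b.

Definition cond_rank (a : A) (b : B) : nat :=
  (index a (sort (pr_ge b) (rv_vals alpha))).+1.

Lemma cond_rank_inj b : {in rv_vals alpha &, injective (cond_rank ^~ b)}.
Proof.
move=> a a' a_val a'_val /succn_inj.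
by apply: (index_inj a); rewrite mem_sort.
Qed.

(* The values ranked up to a form an initial segment of the sorted list, each of
   probability at least that of a. *)
Lemma cond_rank_mulr_pr_le a b : a \in rv_vals alpha ->
  (cond_rank a b)%:R * p a b <= pr_eq P beta b.
Proof.
move=> a_val; set s := sort (pr_ge b) (rv_vals alpha); set i := index a s.
have a_in_s : a \in s by rewrite mem_sort.
have i_lt : (i < size s)%N by rewrite index_mem.
have s_sorted : sorted (pr_ge b) s by apply: sort_sorted => x y; apply: le_total.
have pr_ge_trans : transitive (pr_ge b) by move=> y x z /[swap]; apply: le_trans.
have pr_ge_nth j : (j < i.+1)%N -> p a b <= p (nth a s j) b.
  move=> j_le; rewrite -[in leLHS](nth_index a a_in_s).
  apply: (sorted_leq_nth pr_ge_trans (fun x => lexx _) a s_sorted); rewrite ?inE //.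
  exact: leq_trans j_le i_lt.
rewrite -(sum_pr_eq2_l P alpha beta b) -(perm_big _ (permEl (perm_sort (pr_ge b) _))) /=.
rewrite -/s (big_nth a) (@big_cat_nat _ _ _ i.+1) //=.
rewrite -[leLHS]addr0 lerD ?sumr_ge0 // => [|j _]; last exact: pr_eq2_ge0.
have -> : (cond_rank a b)%:R * p a b = \sum_(0 <= j < i.+1) p a b.
  by rewrite sumr_const_nat subn0 mulr_natl.
by apply: ler_sum_nat => j /andP[_ /pr_ge_nth].
Qed.

Lemma log2_cond_rank_le w :
  log2 (cond_rank (alpha w) (beta w))%:R
  <= - log2 (pr_eq2 P alpha beta (alpha w) (beta w) / pr_eq P beta (beta w)).
Proof.
have pab_gt0 : 0 < p (alpha w) (beta w) := lt_le_trans (P_gt0 w) (pr_eq2_ge P_gt0 _ _ w).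
have pb_gt0 : 0 < pr_eq P beta (beta w) := pr_eq_gt0 P_gt0 (mem_rv_vals beta w).
rewrite RdivE -log2V ?divr_gt0 // invf_div ler_log2 ?ltr0n //.
by rewrite ler_pdivlMr // cond_rank_mulr_pr_le ?mem_rv_vals.
Qed.

End ConditionalRank.

Theorem mainTheorem1 :
  exists C : R,
    forall (Omega : finType) (P : Omega -> R), is_fprob P ->
    forall (A B : eqType) (alpha : Omega -> A) (beta : Omega -> B),
    exists gamma : Omega -> nat,
      cond_entropy P alpha (rv_pair beta gamma) = 0 /\
      entropy P gamma <= 2 * cond_entropy P alpha beta + C.
Proof.
exists 1 => Omega P [P_gt0 P_sum1] A B alpha beta.
pose gamma w := cond_rank P alpha beta (alpha w) (beta w).
exists gamma; split.
  apply: cond_entropy_eq0 => // w v [eq_beta eq_rank].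
  apply: (cond_rank_inj (P := P) (beta := beta) (b := beta w) (mem_rv_vals _ w) (mem_rv_vals _ v)).
  by rewrite /cond_rank eq_rank -eq_beta.
have gamma_pos w : (0 < gamma w)%N by [].
apply: le_trans (entropy_le_cross_entropy P_gt0 P_sum1 (q := inv_pronic) _ _) _.
- by move=> k /rv_valsP[w <-]; apply: inv_pronic_gt0.
- exact/sum_inv_pronic_le1/undup_uniq.
rewrite (cond_entropyE P_gt0) -[X in _ + X]P_sum1 mulr_sumr -big_split /=.
apply: ler_sum => w _; rewrite mulrCA -[X in _ + X]mulr1 -mulrDr.
apply: ler_wpM2l; first exact: ltW.
have := neg_log2_inv_pronic (gamma_pos w).
have := log2_cond_rank_le alpha beta P_gt0 w; rewrite -/(gamma w); lra.
Qed.
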